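(* Fix constants $\lambda_1,\ldots,\lambda_K\ge 0$ and $\mu_1,\ldots,\mu_M\ge 0$. For a channel realization $\boldsymbol{\alpha}$ consider the problem $$\max_{p_1,\ldots,p_K\ge 0}\ \log\Big(1+\sum_{k=1}^K h_kp_k\Big)-\sum_{k=1}^K\lambda_kp_k-\sum_{m=1}^M\mu_m\sum_{k=1}^K g_{km}p_k .$$ Then, for almost every realization $\boldsymbol{\alpha}$, any optimal solution $(p_1^*,\ldots,p_K^* )$ of this problem has at most one index $i\in\{1,\ldots,K\}$ with $p_i^*>0$.
   Context: $\boldsymbol{\alpha}=(h_1,\ldots,h_K,g_{11},\ldots,g_{KM})$ is a random vector of nonnegative channel power gains ($h_k$: secondary user $k$ to secondary base station; $g_{km}$: secondary user $k$ to primary receiver $m$) with a continuous, differentiable joint cumulative distribution function, the $h_k$'s and $g_{km}$'s being independent. ''Almost every'' refers to the distribution of $\boldsymbol{\alpha}$. *)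

From HB Require Import structures.
From mathcomp Require Import all_boot all_order all_algebra.
From mathcomp Require Import all_classical all_reals all_analysis.
Set Implicit Arguments. Unset Strict Implicit. Unset Printing Implicit Defensive.
Import Order.TTheory GRing.Theory Num.Theory.
Import numFieldTopology.Exports numFieldNormedType.Exports.
Local Open Scope classical_set_scope.
Local Open Scope ring_scope.

(* Mutual independence of a finite family of real random variables:
   the product rule holds for every choice of measurable sets
   (taking B i = setT covers every subfamily). *)
Definition mutually_independent d (T : measurableType d) (R : realType)
  (P : probability T R) (I : finType) (X : I -> {RV P >-> R}) : Prop :=
  forall B : I -> set R, (forall i, measurable (B i)) ->
    P (\bigcap_(i in [set: I]) (X i @^-1` B i)) =
    (\prod_(i : I) P (X i @^-1` B i))%E.

(* The channel vector alpha = (h_1..h_K, g_11..g_KM) as a family indexed by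
   'I_K + 'I_K * 'I_M. *)
Definition alpha_family d (T : measurableType d) (R : realType)
  (P : probability T R) (K M : nat)
  (h : 'I_K -> {RV P >-> R}) (g : 'I_K -> 'I_M -> {RV P >-> R})
  (i : 'I_K + ('I_K * 'I_M)%type) : {RV P >-> R} :=
  match i with inl k => h k | inr km => g km.1 km.2 end.

Definition objective (R : realType) (K M : nat)
  (lam : 'I_K -> R) (mu : 'I_M -> R) (hv : 'I_K -> R) (gv : 'I_K -> 'I_M -> R)
  (p : 'I_K -> R) : R :=
  ln (1 + \sum_(k < K) hv k * p k) - \sum_(k < K) lam k * p k
  - \sum_(m < M) mu m * \sum_(k < K) gv k m * p k.

Definition is_optimal (R : realType) (K M : nat)
  (lam : 'I_K -> R) (mu : 'I_M -> R) (hv : 'I_K -> R) (gv : 'I_K -> 'I_M -> R)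
  (p : 'I_K -> R) : Prop :=
  (forall k, 0 <= p k) /\
  forall q : 'I_K -> R, (forall k, 0 <= q k) ->
    objective lam mu hv gv q <= objective lam mu hv gv p.

From HB Require Import structures.
From mathcomp Require Import all_boot all_order all_algebra.
From mathcomp Require Import all_classical all_reals all_analysis.
From mathcomp Require Import measurable_realfun.
From mathcomp Require Import ring lra.
Import Order.TTheory GRing.Theory Num.Theory.
Import numFieldTopology.Exports numFieldNormedType.Exports.
Local Open Scope classical_set_scope.
Local Open Scope ring_scope.
Set Implicit Arguments.
Unset Strict Implicit.
Unset Printing Implicit Defensive.

(* If an optimal allocation p has two active users i <> j, shifting power
   between them at fixed received power [\sum_k h_k p_k] is feasible in both
   directions, so optimality forces [h_j c_i = h_i c_j], where
   [c_k = lam_k + \sum_m mu_m g_km] is the unit cost of user k; moreover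
   [c_j = 0] forces [h_j = 0], since raising [p_j] would then be free.  Hence
   [h_j = 0] or [h_i = h_j c_i / c_j], and the right-hand side only depends on
   the coordinates of alpha other than [h_i].  A coordinate with a continuous
   cdf equals an independent variable Z with probability at most 1/N for
   every N: cut the line into N cells of equal probability for [h_i]; by
   independence [P(h_i = Z) <= \sum_k P(h_i \in C_k) P(Z \in C_k) = 1/N]. *)

Lemma sum_mul_delta (R : nzSemiRingType) (n : nat) (x : 'I_n -> R) (i : 'I_n) :
  \sum_(k < n) x k * (k == i)%:R = x i.
Proof.
by rewrite (bigD1 i) //= eqxx mulr1 big1 ?addr0 // => k /negbTE ->; rewrite mulr0.
Qed.

Section power_allocation.
Context (R : realType) (K M : nat).
Context (lam : 'I_K -> R) (mu : 'I_M -> R).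
Context (hv : 'I_K -> R) (gv : 'I_K -> 'I_M -> R).
Hypothesis hv_ge0 : forall k, 0 <= hv k.

Definition unit_cost (k : 'I_K) : R := lam k + \sum_(m < M) mu m * gv k m.

Lemma objectiveE (p : 'I_K -> R) :
  objective lam mu hv gv p =
  ln (1 + \sum_(k < K) hv k * p k) - \sum_(k < K) unit_cost k * p k.
Proof.
rewrite /objective /unit_cost -addrA -opprD; congr (_ - _).
under [RHS]eq_bigr do rewrite mulrDl mulr_suml.
rewrite big_split /= [X in _ = _ + X]exchange_big /=; congr (_ + _).
by apply: eq_bigr => m _; rewrite mulr_sumr; apply: eq_bigr => k _; rewrite mulrA.
Qed.

Lemma optimal_cost_le (p q : 'I_K -> R) :
  is_optimal lam mu hv gv p -> (forall k, 0 <= q k) ->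
  \sum_(k < K) hv k * q k = \sum_(k < K) hv k * p k ->
  \sum_(k < K) unit_cost k * p k <= \sum_(k < K) unit_cost k * q k.
Proof. by move=> [_ opt] q_ge0 hq; move: (opt q q_ge0); rewrite !objectiveE hq; lra. Qed.

Lemma optimal_active_balance (p : 'I_K -> R) (i j : 'I_K) :
  is_optimal lam mu hv gv p -> i != j -> 0 < p i -> 0 < p j ->
  hv j * unit_cost i = hv i * unit_cost j.
Proof.
move=> opt ij pi0 pj0.
(* Shifting power between [i] and [j] along [v] keeps the received power fixed. *)
pose v k : R := hv j * (k == i)%:R - hv i * (k == j)%:R.
have dot_v (x : 'I_K -> R) t :
    \sum_(k < K) x k * (p k + t * v k) =
    \sum_(k < K) x k * p k + t * (x i * hv j - x j * hv i).
  under eq_bigr do rewrite mulrDr mulrCA /v mulrBr !mulrA.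
  by rewrite big_split /= -mulr_sumr sumrB !sum_mul_delta.
pose e := Num.min (p i) (p j) / (hv i + hv j + 1).
have hi0 := hv_ge0 i; have hj0 := hv_ge0 j.
have e_gt0 : 0 < e by rewrite divr_gt0 ?lt_min ?pi0 ?pj0 //; lra.
have e_hj : e * hv j <= p i.
  have : e * (hv i + hv j + 1) <= p i by rewrite mulfVK ?ge_min ?lexx //; lra.
  nra.
have e_hi : e * hv i <= p j.
  have : e * (hv i + hv j + 1) <= p j by rewrite mulfVK ?ge_min ?lexx ?orbT //; lra.
  nra.
have shift_ge0 t : -e <= t <= e -> forall k, 0 <= p k + t * v k.
  move=> /andP[te1 te2] k; have pk := opt.1 k; rewrite /v.
  have [->|_] := eqVneq k i; first by rewrite (negbTE ij) mulr1 mulr0 subr0; nra.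
  have [->|_] := eqVneq k j; first by rewrite mulr1 mulr0 sub0r; nra.
  by rewrite !mulr0 subrr mulr0 addr0.
have cost_shift t : -e <= t <= e ->
    0 <= t * (unit_cost i * hv j - unit_cost j * hv i).
  move=> te; have := optimal_cost_le opt (shift_ge0 t te).
  by rewrite !dot_v [hv i * _]mulrC subrr mulr0 addr0 => /(_ erefl); lra.
have : 0 <= e * (unit_cost i * hv j - unit_cost j * hv i).
  by apply: cost_shift; rewrite lexx andbT; lra.
have : 0 <= - e * (unit_cost i * hv j - unit_cost j * hv i).
  by apply: cost_shift; rewrite lexx /=; lra.
nra.
Qed.

Lemma costless_gain_eq0 (p : 'I_K -> R) (j : 'I_K) :
  is_optimal lam mu hv gv p -> unit_cost j = 0 -> hv j = 0.
Proof.
move=> [p_ge0 opt] cj0.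
pose q k := p k + (k == j)%:R.
have q_ge0 k : 0 <= q k by rewrite addr_ge0 ?ler0n.
have dot_q (x : 'I_K -> R) :
    \sum_(k < K) x k * q k = \sum_(k < K) x k * p k + x j.
  by under eq_bigr do rewrite mulrDr; rewrite big_split /= sum_mul_delta.
have S_ge0 : 0 <= \sum_(k < K) hv k * p k.
  by apply: sumr_ge0 => k _; rewrite mulr_ge0.
have hj0 := hv_ge0 j.
move: (opt q q_ge0); rewrite !objectiveE !dot_q cj0 addr0 lerD2r.
rewrite ler_ln ?posrE; lra.
Qed.

Lemma optimal_pair_gain (p : 'I_K -> R) (i j : 'I_K) :
  is_optimal lam mu hv gv p -> i != j -> 0 < p i -> 0 < p j ->
  hv j = 0 \/ hv i = hv j * unit_cost i / unit_cost j.
Proof.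
move=> opt ij pi0 pj0; have [->|hj0] := eqVneq (hv j) 0; [by left | right].
have cj0 : unit_cost j != 0.
  by apply: contra_neq hj0; exact: costless_gain_eq0 opt.
by rewrite (optimal_active_balance opt ij pi0 pj0) mulfK.
Qed.
End power_allocation.

Section coordinate_independence.
Context d (T : measurableType d) (R : realType) (P : probability T R).
Context (I : finType) (X : I -> {RV P >-> R}) (i0 : I).

Definition cylinders_off : set (set T) :=
  [set S | exists B : I -> set R, (forall k, measurable (B k)) /\ B i0 = setT /\
     S = \bigcap_(k in [set: I]) (X k @^-1` B k)].

Lemma cylinders_off_setI_closed : setI_closed cylinders_off.
Proof.
move=> _ _ [B1 [mB1 [B1i0 ->]]] [B2 [mB2 [B2i0 ->]]].
exists (fun k => B1 k `&` B2 k); split; first by move=> k; exact: measurableI.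
by rewrite B1i0 B2i0 setIT -bigcapI.
Qed.

Lemma cylinders_off_measurable : cylinders_off `<=` measurable.
Proof.
move=> _ [B [mB [_ ->]]]; apply: fin_bigcap_measurable; first exact: finite_finset.
by move=> k _; exact: measurable_funPTI.
Qed.

Lemma sigma_cylinders_off_measurable : <<s cylinders_off >> `<=` measurable.
Proof.
apply: smallest_sub; first exact: sigma_algebra_measurable.
exact: cylinders_off_measurable.
Qed.

Lemma measurable_coord_off k : k != i0 ->
  measurable_fun [set: g_sigma_algebraType cylinders_off]
    (fun w : g_sigma_algebraType cylinders_off => X k w).
Proof.
move=> ki0 _ B mB; rewrite setTI; apply: sub_sigma_algebra.
exists (fun l => if l == k then B else setT); split; first by move=> l; case: eqP.
split; first by rewrite eq_sym (negbTE ki0).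
apply/seteqP; split => w /=; first by move=> Bw l _; case: eqP => [->|].
by move=> /(_ k Logic.I); rewrite eqxx.
Qed.

Lemma measurable_fun_off (Z : g_sigma_algebraType cylinders_off -> R) :
  measurable_fun [set: g_sigma_algebraType cylinders_off] Z ->
  measurable_fun [set: T] (Z : T -> R).
Proof. by move=> mZ _ B mB; apply: sigma_cylinders_off_measurable; exact: mZ. Qed.

Lemma independent_coord_off (A : set R) (S : set T) :
  mutually_independent X -> measurable A -> <<s cylinders_off >> S ->
  P (X i0 @^-1` A `&` S) = (P (X i0 @^-1` A) * P S)%E.
Proof.
move=> indX mA.
set XA := X i0 @^-1` A.
have mXA : measurable XA by exact: measurable_funPTI.
have finP (U : set T) : measurable U -> P U \is a fin_num by exact: fin_num_measure.
pose H := [set S | measurable S /\ P (XA `&` S) = (P XA * P S)%E].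
suff: <<s cylinders_off >> `<=` H by move=> sH /sH [].
apply: lambda_system_subset; [exact: cylinders_off_setI_closed| | |by []].
- apply/dynkin_lambda_system; split.
  + by split; [exact: measurableT | rewrite setIT probability_setT mule1].
  + move=> U [mU hU]; split; first exact: measurableC.
    rewrite -setDE (measureD mXA mU); last by rewrite ltey_eq finP.
    transitivity (P XA - P XA * P U)%E; first by congr (_ - _)%E; exact: hU.
    by rewrite probability_setC // muleBr ?mule1 ?finP.
  + move=> F tF hF; split; first by apply: bigcup_measurable => k _; case: (hF k).
    have mF k : measurable (F k) by case: (hF k).
    rewrite setI_bigcupr measure_bigcup //; last 2 first.
    * by move=> k _; exact: measurableI.
    * exact: trivIset_setIl.
    rewrite measure_bigcup // -(fineK (finP _ mXA)) -nneseriesZl //.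
    by apply: eq_eseriesr => k _; rewrite fineK ?finP //; case: (hF k).
- move=> _ [B [mB [Bi0 ->]]]; split.
    by apply: cylinders_off_measurable; exists B.
  pose B' k := if k == i0 then A else B k.
  have mB' k : measurable (B' k) by rewrite /B'; case: eqP.
  have -> : XA `&` \bigcap_(k in [set: I]) X k @^-1` B k =
            \bigcap_(k in [set: I]) X k @^-1` B' k.
    apply/seteqP; split => w /=.
    - by move=> [XAw Bw] k _; rewrite /B'; case: eqP => [->//|_]; exact: Bw.
    - move=> B'w; split; first by have := B'w i0 Logic.I; rewrite /B' eqxx.
      by move=> k _; have := B'w k Logic.I; rewrite /B'; case: eqP => // ->; rewrite Bi0.
  rewrite (indX B') // (indX B) // (bigD1 i0) //= [in RHS](bigD1 i0) //=.
  rewrite /B' eqxx Bi0 preimage_setT probability_setT mul1e.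
  by congr (_ * _)%E; apply: eq_bigr => k /negbTE ->.
Qed.

End coordinate_independence.

Section continuous_cdf.
Context d (T : measurableType d) (R : realType) (P : probability T R).
Context (Y : {RV P >-> R}).
Let F (t : R) : R := fine (cdf Y t).
Hypothesis F_continuous : continuous F.

Let cdfE t : cdf Y t = (F t)%:E.
Proof. by rewrite /F fineK // fin_num_measure. Qed.

Let F_nondecreasing : {homo F : x y / x <= y}.
Proof. by move=> x y xy; rewrite /F fine_le ?fin_num_measure ?cdf_nondecreasing. Qed.

Lemma continuous_cdf_surjective (c : R) : 0 < c < 1 -> exists x, F x = c.
Proof.
move=> /andP[c_gt0 c_lt1].
have [u [_ Fu]] : \forall x \near -oo, F x < c.
  by apply: cvgr_lt c_gt0; exact/fine_cvg/cvg_cdfNy0.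
have [v [_ Fv]] : \forall x \near +oo, c < F x.
  by apply: cvgr_gt c_lt1; exact/fine_cvg/cvg_cdfy1.
pose a := u - 1; pose b := `|v| + `|a| + 1.
have ab : a <= b /\ v < b.
  have := ler_norm a; have := ler_norm v; have := normr_ge0 a; have := normr_ge0 v.
  by rewrite /b; split; lra.
have Fa : F a < c by apply: Fu; rewrite /a ltrBlDr ltrDl.
have Fb : c < F b by apply: Fv; exact: ab.2.
have /(IVT ab.1 (continuous_subspaceT F_continuous))[x _ Fx] :
    Num.min (F a) (F b) <= c <= Num.max (F a) (F b).
  by rewrite ge_min le_max (ltW Fa) (ltW Fb) orbT.
by exists x.
Qed.

Lemma continuous_cdf_equiprobable_partition (N : nat) : (0 < N)%N ->
  exists C : nat -> set R, [/\ forall k, measurable (C k), trivIset setT C,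
    \big[setU/set0]_(k < N) C k = setT &
    forall k, (k < N)%N -> P (Y @^-1` C k) = (N%:R^-1)%:E].
Proof.
move=> N_gt0; have N0 : N%:R != 0 :> R by rewrite pnatr_eq0 -lt0n.
have [a Fa] : exists a : nat -> R, forall k, (k.+1 < N)%N -> F (a k) = k.+1%:R / N%:R.
  suff /choice[a Fa] : forall k, exists x, (k.+1 < N)%N -> F x = k.+1%:R / N%:R.
    by exists a.
  move=> k; case: (ltnP k.+1 N) => kN; last by exists 0.
  have kN01 : 0 < (k.+1%:R / N%:R : R) < 1.
    by rewrite divr_gt0 ?ltr0n //= ltr_pdivrMr ?ltr0n // mul1r ltr_nat.
  by have [x Fx] := continuous_cdf_surjective kN01; exists x.
pose L k : set R := if (k.+1 < N)%N then `]-oo, a k]%classic else setT.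
have PL k : (k < N)%N -> P (Y @^-1` L k) = (k.+1%:R / N%:R)%:E.
  rewrite /L; case: (ltnP k.+1 N) => [kN _|Nk kN]; first by rewrite -Fa // -cdfE.
  have -> : k.+1 = N by apply/eqP; rewrite eqn_leq kN Nk.
  by rewrite preimage_setT probability_setT divff.
have ndL : nondecreasing_seq L.
  apply/nondecreasing_seqP => k; apply/subsetPset; rewrite /L.
  case: (ltnP k.+2 N) => [k2N|_]; last by case: ifP.
  have k1N : (k.+1 < N)%N := ltn_trans (ltnSn _) k2N.
  rewrite k1N => x /=; rewrite !in_itv /= => /le_trans; apply.
  rewrite leNgt; apply/negP => /ltW /F_nondecreasing.
  by rewrite !Fa // ler_pM2r ?invr_gt0 ?ltr0n // ler_nat ltnn.
exists (seqD L); split.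
- by move=> [|k] /=; [|apply: measurableD]; rewrite /L; case: ifP.
- exact: trivIset_seqD.
- by rewrite -(prednK N_gt0) nondecreasing_bigsetU_seqD // /L prednK // ltnn.
move=> [|k] kN /=; first by rewrite PL // mul1r.
have mYL j : measurable (Y @^-1` L j).
  by apply: measurable_funPTI; rewrite /L; case: ifP.
rewrite [Y @^-1` _](_ : _ = Y @^-1` L k.+1 `\` Y @^-1` L k) //.
rewrite measureD // ?ltey_eq ?fin_num_measure //.
rewrite setIidr; last by apply: preimage_subset; exact/subsetPset/ndL.
transitivity ((k.+2%:R / N%:R : R)%:E - (k.+1%:R / N%:R : R)%:E)%E.
  by congr (_ - _)%E; [exact: PL | exact: PL (ltnW kN)].
by rewrite -EFinB -mulrBl -natrB // subSnn mul1r.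
Qed.

End continuous_cdf.

Lemma measurable_set_eq d (T : measurableType d) (R : realType) (f g : T -> R) :
  measurable_fun [set: T] f -> measurable_fun [set: T] g ->
  measurable [set x | f x = g x].
Proof.
move=> mf mg.
rewrite (_ : [set x | f x = g x] = [set: T] `&` (fun x => f x == g x) @^-1` [set true]).
  exact: measurable_fun_eqr.
by apply/seteqP; split => x /=; [move=> ->; rewrite eqxx | case=> _ /eqP].
Qed.

Lemma le_invn_eq0 (R : realType) (x : \bar R) :
  (0 <= x)%E -> (forall n, x <= (n.+1%:R^-1)%:E)%E -> x = 0%E.
Proof.
move=> x_ge0 x_le; have := x_le 0%N; rewrite invr1 => x_le1.
have xfin : x \is a fin_num by rewrite ge0_fin_numE // (le_lt_trans x_le1) ?ltry.
apply/eqP; rewrite eq_le x_ge0 andbT -(fineK xfin) lee_fin leNgt; apply/negP.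
by case/ltr_add_invr => k; rewrite add0r; apply/negP; rewrite -leNgt -lee_fin fineK.
Qed.

Lemma indep_continuous_cdf_eq0 d (T : measurableType d) (R : realType)
    (P : probability T R) (I : finType) (X : I -> {RV P >-> R}) (i0 : I)
    (Z : g_sigma_algebraType (cylinders_off X i0) -> R) :
  mutually_independent X -> continuous (fun t => fine (cdf (X i0) t)) ->
  measurable_fun [set: g_sigma_algebraType (cylinders_off X i0)] Z ->
  P [set w | X i0 w = Z w] = 0%E.
Proof.
move=> indX cF mZ; set Y := X i0; set E := [set w | Y w = Z w].
apply: le_invn_eq0 => // n; set N := n.+1.
have [C [mC trivC coverC PC]] := continuous_cdf_equiprobable_partition cF (ltn0Sn n).
pose ZC k : set T := (Z : T -> R) @^-1` C k.
have mZC k : <<s cylinders_off X i0 >> (ZC k).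
  by have := mZ measurableT _ (mC k); rewrite setTI.
pose S k := Y @^-1` C k `&` ZC k.
have mS k : measurable (S k).
  apply: measurableI; first exact: measurable_funPTI.
  exact: sigma_cylinders_off_measurable.
have E_sub : E `<=` \big[setU/set0]_(k < N) S k.
  move=> w Ew; have : (\big[setU/set0]_(k < N) C k) (Y w) by rewrite coverC.
  by rewrite -!bigcup_mkord => -[k kN Ck]; exists k => //; split => //; rewrite /ZC /= -Ew.
have trivS : trivIset setT S.
  by move=> k l _ _ [w [[Ck _] [Cl _]]]; apply: trivC => //; exists (Y w).
have trivZC : trivIset setT ZC.
  by move=> k l _ _ [w [Ck Cl]]; apply: trivC => //; exists (Z w).
have mE : measurable E.
  exact: measurable_set_eq (measurable_funP Y) (measurable_fun_off mZ).
suff PS : (P (\big[setU/set0]_(k < N) S k) <= (N%:R^-1)%:E)%E.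
  apply: le_trans PS; apply: le_measure E_sub; rewrite inE //.
  exact: bigsetU_measurable.
have PS_indep : P (\big[setU/set0]_(k < N) S k) =
    (\sum_(k < N) (N%:R^-1)%:E * P (ZC k))%E.
  rewrite measure_bigsetU //; apply: eq_bigr => k _; rewrite -(PC k) //.
  exact: independent_coord_off indX (mC k) (mZC k).
have PZC : (\sum_(k < N) P (ZC k))%E =
    P (\big[setU/set0]_(k < N) ZC k).
  by rewrite measure_bigsetU // => k; exact: sigma_cylinders_off_measurable.
rewrite PS_indep -ge0_sume_distrr; last by move=> k _; exact: measure_ge0.
rewrite PZC -[X in (_ <= X)%E]mule1; apply: lee_wpmul2l; first by rewrite lee_fin invr_ge0.
by apply: probability_le1; apply: bigsetU_measurable => k _; exact: sigma_cylinders_off_measurable.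
Qed.

Lemma measurable_invr (R : realType) : measurable_fun [set: R] (@GRing.inv R).
Proof.
have -> : [set: R] = [set 0] `|` [set x | x != 0].
  by apply/seteqP; split => x //= _; case: eqP; [left|right].
apply/measurable_funU => //; first by apply: open_measurable; exact: open_neq.
split; first exact: measurable_fun_set1.
apply: open_continuous_measurable_fun; first exact: open_neq.
by move=> x; rewrite inE /= => x0; exact: inv_continuous.
Qed.

Lemma measurable_unit_cost d (T : measurableType d) (R : realType)
    (P : probability T R) (K M : nat) (h : 'I_K -> {RV P >-> R})
    (g : 'I_K -> 'I_M -> {RV P >-> R}) (lam : 'I_K -> R) (mu : 'I_M -> R)
    (i k : 'I_K) :
  measurable_fun [set: g_sigma_algebraType (cylinders_off (alpha_family h g) (inl i))]
    (fun w => unit_cost lam mu (fun k m => g k m w) k).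
Proof.
apply: measurable_funD; first exact: measurable_cst.
apply: measurable_sum => m; apply: measurable_funM; first exact: measurable_cst.
exact: (@measurable_coord_off _ _ _ _ _ (alpha_family h g) (inl i) (inr (k, m))).
Qed.

Lemma ae_not_two_active d (T : measurableType d) (R : realType)
    (P : probability T R) (K M : nat) (h : 'I_K -> {RV P >-> R})
    (g : 'I_K -> 'I_M -> {RV P >-> R}) (lam : 'I_K -> R) (mu : 'I_M -> R)
    (i j : 'I_K) :
  (forall k w, 0 <= h k w) -> mutually_independent (alpha_family h g) ->
  (forall k, continuous (fun t => fine (cdf (h k) t))) -> i != j ->
  {ae P, forall w p, is_optimal lam mu (fun k => h k w) (fun k m => g k m w) p ->
     0 < p i -> 0 < p j -> False}.
Proof.
move=> h_ge0 indep cdf_h ij.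
pose gain_ratio (w : g_sigma_algebraType (cylinders_off (alpha_family h g) (inl i))) :=
  h j w * unit_cost lam mu (fun k m => g k m w) i / unit_cost lam mu (fun k m => g k m w) j.
have m_gain_ratio : measurable_fun setT gain_ratio.
  apply: measurable_funM; first apply: measurable_funM.
  - apply: (@measurable_coord_off _ _ _ _ _ (alpha_family h g) (inl i) (inl j)).
    by rewrite /= eq_sym.
  - exact: measurable_unit_cost.
  - by apply: measurableT_comp (@measurable_invr R) _; exact: measurable_unit_cost.
pose A1 := [set w : T | h j w = 0]; pose A2 := [set w : T | h i w = gain_ratio w].
have PA1 : P A1 = 0%E.
  apply: (@indep_continuous_cdf_eq0 _ _ _ _ _ _ (inl j) (fun=> 0) indep (cdf_h j)).
  exact: measurable_cst.
have PA2 : P A2 = 0%E.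
  exact: (@indep_continuous_cdf_eq0 _ _ _ _ _ _ (inl i) _ indep (cdf_h i) m_gain_ratio).
have mA1 : measurable A1 by apply: measurable_set_eq => //; exact: measurable_funP.
have mA2 : measurable A2.
  by apply: measurable_set_eq; [exact: measurable_funP | exact: measurable_fun_off].
exists (A1 `|` A2); split; first exact: measurableU.
  apply/eqP; rewrite eq_le measure_ge0 andbT.
  have PU : (P (A1 `|` A2) <= P A1 + P A2)%E := measureU2 P mA1 mA2.
  by rewrite (le_trans PU) // PA1 PA2 adde0.
move=> w /= two_active; apply: contrapT => notA; apply: two_active => p opt pi pj.
by case: (optimal_pair_gain (h_ge0^~ w) opt ij pi pj) => ?; apply: notA; [left | right].
Qed.

Unset Implicit Arguments.

Theorem lemma3p1 (d : measure_display) (T : measurableType d) (R : realType)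
  (P : probability T R) (K M : nat)
  (h : 'I_K -> {RV P >-> R}) (g : 'I_K -> 'I_M -> {RV P >-> R})
  (lam : 'I_K -> R) (mu : 'I_M -> R) :
  (forall k, 0 <= lam k) -> (forall m, 0 <= mu m) ->
  (forall k w, 0 <= h k w) -> (forall k m w, 0 <= g k m w) ->
  mutually_independent (alpha_family h g) ->
  (forall i, continuous ((fun t : R => fine (cdf (alpha_family h g i) t)) : R -> R)) ->
  (forall i (t : R), derivable ((fun t : R => fine (cdf (alpha_family h g i) t)) : R -> R) t 1) ->
  {ae P, forall w : T,
     forall p : 'I_K -> R,
       is_optimal lam mu (fun k => h k w) (fun k m => g k m w) p ->
       forall i j : 'I_K, 0 < p i -> 0 < p j -> i = j}.
Proof.
move=> _ _ h_ge0 _ indep cdf_cont _.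
have aeP := ae_filter_ringOfSetsType P.
have pair_ae (i j : 'I_K) : {ae P, forall w p,
    is_optimal lam mu (fun k => h k w) (fun k m => g k m w) p ->
    0 < p i -> 0 < p j -> i = j}.
  have [->|ij] := eqVneq i j; first exact: filterE.
  have cdf_h k : continuous (fun t => fine (cdf (h k) t)) := cdf_cont (inl k).
  apply: filterS (ae_not_two_active lam mu h_ge0 indep cdf_h ij).
  by move=> w no_pair p opt pi pj; case: (no_pair p opt pi pj).
have := filter_forall aeP (fun i => filter_forall aeP (pair_ae i)).
by apply: filterS => w pairs p opt i j; exact: pairs i j p opt.
Qed.
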